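(* Let $\mathcal L$ be a non-trivial geometric lattice. Every modular diagram $(\mathcal E,\iota,J)$ of $\mathcal L$ with $J$ non-empty and $\iota^{-1}((\bigvee J)\wedge F_\iota)=\hat0$ is zero in $\mathcal{MD}(\mathcal L)$. Consequently the grading-$\hat0$ part $\mathcal{MD}(\mathcal L,\hat0)$ is one-dimensional, concentrated in degree $0$, and spanned by the class of the empty diagram $(\mathcal L,\mathrm{id}_{\mathcal L},\emptyset)$.
   Context: Geometric lattices. A geometric lattice is a finite lattice $\mathcal L$ (bottom $\hat0$, top $\hat1$, join $\vee$, meet $\wedge$) which is ranked (all maximal chains from $\hat0$ to a given element $F$ have the same length $\mathrm{rk}(F)$), atomic (every element is a join of atoms, i.e. rank-one elements) and semimodular ($\mathrm{rk}(F_1\wedge F_2)+\mathrm{rk}(F_1\vee F_2)\le\mathrm{rk}(F_1)+\mathrm{rk}(F_2)$). Elements are called flats, $\mathrm{At}(\mathcal L)$ denotes the set of atoms, and $\mathcal L$ is non-trivial if it has at least two elements. For a finite family $J$ of atoms, $\bigvee J$ is its join ($\bigvee\emptyset=\hat0$). Every interval $[F_1,F_2]$ is a geometric lattice, and products of geometric lattices are geometric lattices. A flat $F$ is modular if $\mathrm{rk}(F\wedge F')+\mathrm{rk}(F\vee F')=\mathrm{rk}(F)+\mathrm{rk}(F')$ for every flat $F'$. An embedding $\varphi:\mathcal L_1\to\mathcal L_2$ of geometric lattices is an injective order-preserving map preserving joins and sending atoms to atoms. Modular diagrams. Let $\mathcal L$ be a non-trivial geometric lattice. A modular extension of $\mathcal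 L$ is a pair $(\mathcal E,\iota)$ where $\mathcal E$ is a geometric lattice and $\iota:\mathcal L\to\mathcal E$ is an embedding whose image is an interval $[\hat0,F_\iota]$ with $F_\iota$ a modular flat of $\mathcal E$. A modular diagram of $\mathcal L$ is a triple $\Gamma=(\mathcal E,\iota,J)$ with $(\mathcal E,\iota)$ a modular extension and $J=(H_1,\dots,H_n)$ a finite word in the alphabet $\mathrm{At}(\mathcal E)$; its degree is $\deg\Gamma=n-2\big(\mathrm{rk}\bigvee J-\mathrm{rk}((\bigvee J)\wedge F_\iota)\big)$. $\mathcal{MD}(\mathcal L)$ is the $\mathbb Z$-graded $\mathbb Q$-vector space spanned by all modular diagrams, quotiented by the relations: (R1) $(\mathcal E,\iota,J)\sim-(\mathcal E,\iota,J')$ if $J'$ is obtained from $J$ by transposing two letters; (R2) $(\mathcal E,\iota,J)\sim(\mathcal E',\iota',J')$ if there is an embedding $\varphi:\mathcal E\to\mathcal E'$ with $\mathrm{rk}(\mathcal E)=\mathrm{rk}(\mathcal E')$, $\iota'=\varphi\circ\iota$ and $J'=\varphi(J)$ letterwise; (R3) $(\mathcal E,\iota,J)\sim0$ if $F_\iota\vee\bigvee J<\hat1_{\mathcal E}$; (R4) $(\mathcal E,\iota,J)\sim0$ if $\mathcal E\cong\mathcal E_1\times\mathcal E_2$ with $\mathcal E_1,\mathcal E_2$ non-trivial and $F_\iota\in\mathcal E_1\times\{\hat0\}$; (R5) $(\mathcal E,\iota,J)\sim0$ if there is a modular flat $F\ge F_\iota$ of $\mathcal E$ such that exactly two letters of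 $J$ are not below $F$. The grading-$\hat0$ part $\mathcal{MD}(\mathcal L,\hat0)$ is the span of classes of modular diagrams $(\mathcal E,\iota,J)$ with $\iota^{-1}((\bigvee J)\wedge F_\iota)=\hat0$. *)

From HB Require Import structures.
From mathcomp Require Import all_boot all_order all_algebra.
From mathcomp Require Import boolp.
Set Implicit Arguments. Unset Strict Implicit. Unset Printing Implicit Defensive.
Import Order.TTheory GRing.Theory.

(* Geometric lattices: a finite lattice is a finTBLatticeType (finite, with  *)
(* bottom \bot = 0^ and top \top = 1^).                                       *)
Section Lat.
Context {d : Order.disp_t} (T : finTBLatticeType d).

Definition covers (x y : T) : bool :=
  (x < y)%O && [forall z : T, ~~ ((x < z)%O && (z < y)%O)].

Definition maxchain (F : T) (k : nat) : bool :=
  [exists t : k.-tuple T, path covers \bot%O (val t) && (last \bot%O (val t) == F)].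

Definition ranked : Prop :=
  forall (F : T) (k1 k2 : nat), maxchain F k1 -> maxchain F k2 -> k1 = k2.

(* rank of F: the length of a maximal chain from \bot to F (any maximal
   chain has length < #|T|; for a ranked lattice this is well defined) *)
Definition rk (F : T) : nat :=
  \big[maxn/0%N]_(k < #|T|) (if maxchain F k then (k : nat) else 0%N).

Definition atom (x : T) : bool := rk x == 1%N.

Definition atomic : Prop :=
  forall F : T, exists A : {set T},
    (forall a, a \in A -> atom a) /\ F = \big[Order.join/ \bot%O]_(a in A) a.

Definition semimodular : Prop :=
  forall F1 F2 : T, (rk (F1 `&` F2)%O + rk (F1 `|` F2)%O <= rk F1 + rk F2)%N.

Definition geometric : Prop := [/\ ranked, atomic & semimodular].

Definition nontrivial : Prop := (1 < #|T|)%N.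

Definition modular_flat (F : T) : Prop :=
  forall F' : T, (rk (F `&` F')%O + rk (F `|` F')%O = rk F + rk F')%N.

Definition joinJ (J : seq T) : T := \big[Order.join/ \bot%O]_(H <- J) H.

End Lat.

Definition embedding {d1 d2 : Order.disp_t} (T1 : finTBLatticeType d1)
    (T2 : finTBLatticeType d2) (f : T1 -> T2) : Prop :=
  [/\ injective f,
      (forall x y : T1, (x <= y)%O -> (f x <= f y)%O),
      f \bot%O = \bot%O,
      (forall x y : T1, f (x `|` y)%O = (f x `|` f y)%O)
    & (forall a : T1, atom a -> atom (f a))].

(* Modular extension (E, iota) of L: iota is an embedding whose image is the
   interval [\bot, F_iota] with F_iota modular; necessarily F_iota = iota \top. *)
Definition modext {dL dE : Order.disp_t} (L : finTBLatticeType dL)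
    (E : finTBLatticeType dE) (iota : L -> E) : Prop :=
  [/\ embedding iota,
      modular_flat (iota \top%O)
    & forall y : E, (y <= iota \top%O)%O <-> exists x : L, iota x = y].

Record diagram {dL : Order.disp_t} (L : finTBLatticeType dL) := Diagram {
  dg_disp : Order.disp_t;
  dg_E : finTBLatticeType dg_disp;
  dg_geom : geometric dg_E;
  dg_iota : L -> dg_E;
  dg_ext : modext dg_iota;
  dg_J : seq dg_E;
  dg_atoms : all (@atom _ dg_E) dg_J }.

Section Diagrams.
Context {dL : Order.disp_t} (L : finTBLatticeType dL).
Local Open Scope ring_scope.

Definition Fiota (G : diagram L) : dg_E G := dg_iota G \top%O.

Definition deg (G : diagram L) : int :=
  (size (dg_J G))%:Z
  - 2%:Z * ((rk (joinJ (dg_J G)))%:Z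
            - (rk (joinJ (dg_J G) `&` Fiota G)%O)%:Z).

Definition grade0 (G : diagram L) : Prop :=
  forall x : L, dg_iota G x = (joinJ (dg_J G) `&` Fiota G)%O -> x = \bot%O.

(* The formal Q-vector space spanned by modular diagrams: finitely supported
   functions diagram L -> rat; delta G is the basis vector of G. *)
Definition delta (G : diagram L) : diagram L -> rat :=
  fun D => if pselect (D = G) then 1 else 0.

Definition tswap {d : Order.disp_t} {T : finTBLatticeType d}
    (J : seq T) (p q : nat) : seq T :=
  set_nth \bot%O (set_nth \bot%O J p (nth \bot%O J q)) q (nth \bot%O J p).

Definition splits_off {d : Order.disp_t} (E : finTBLatticeType d) (F : E) : Prop :=
  exists (d1 d2 : Order.disp_t) (E1 : finTBLatticeType d1)
         (E2 : finTBLatticeType d2) (psi : E -> E1 * E2),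
    [/\ geometric E1 /\ geometric E2, nontrivial E1 /\ nontrivial E2,
        bijective psi,
        (forall x y : E, (x <= y)%O =
            ((psi x).1 <= (psi y).1)%O && ((psi x).2 <= (psi y).2)%O)
      & (psi F).2 = \bot%O].

(* Relation vectors (R1)-(R5); each must vanish in MD(L). *)
Inductive relvec : (diagram L -> rat) -> Prop :=
| rel1 (dE : Order.disp_t) (E : finTBLatticeType dE) (hE : geometric E)
       (i : L -> E) (hi : modext i) (J : seq E) (hJ : all (@atom _ E) J)
       (p q : nat) (hJ' : all (@atom _ E) (tswap J p q)) :
    (p < q < size J)%N ->
    relvec (fun D => delta (Diagram hE hi hJ) D + delta (Diagram hE hi hJ') D)
| rel2 (G G' : diagram L) (phi : dg_E G -> dg_E G') :
    embedding phi ->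
    rk (\top%O : dg_E G) = rk (\top%O : dg_E G') ->
    (forall x : L, dg_iota G' x = phi (dg_iota G x)) ->
    dg_J G' = map phi (dg_J G) ->
    relvec (fun D => delta G D - delta G' D)
| rel3 (G : diagram L) :
    (Fiota G `|` joinJ (dg_J G) < \top)%O -> relvec (delta G)
| rel4 (G : diagram L) :
    splits_off (Fiota G) -> relvec (delta G)
| rel5 (G : diagram L) (F : dg_E G) :
    modular_flat F -> (Fiota G <= F)%O ->
    count (fun H => ~~ (H <= F)%O) (dg_J G) = 2%N ->
    relvec (delta G).

(* The span of the relation vectors: v is zero in MD(L) iff inspan v. *)
Inductive inspan : (diagram L -> rat) -> Prop :=
| span0 : inspan (fun _ => 0)
| spanS (c : rat) (r v : diagram L -> rat) :
    relvec r -> inspan v -> inspan (fun D => c * r D + v D)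
| span_ext (v w : diagram L -> rat) :
    inspan v -> (forall D, v D = w D) -> inspan w.

End Diagrams.

Lemma id_modext {d : Order.disp_t} (L : finTBLatticeType d) :
  modext (fun x : L => x).
Proof.
split.
- split.
  + by move=> x y.
  + by move=> x y.
  + by [].
  + by move=> x y.
  + by move=> a.
- move=> F'; rewrite meet1x join1x addnC; reflexivity.
- move=> y; split; first by move=> _; exists y.
  by move=> _; exact: lex1.
Qed.

Definition emptyDiagram {d : Order.disp_t} (L : finTBLatticeType d)
    (hL : geometric L) : diagram L :=
  @Diagram d L d L hL (fun x : L => x) (id_modext L) [::] erefl.

(* Let G = (E, iota, J) with J non-empty, F = iota \top and X = \join J, so that
   X `&` F = \bot by the grading condition. Either F `|` X < \top and (R3) kills G,
   or (a, b) |-> a `|` b embeds [\bot, F] x [\bot, X] into E: modularity of F and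
   semimodularity make this join map additive on ranks, hence injective and of full
   rank. The diagram read in the product splits off (R4) and is identified with G
   by (R2). For the empty diagram, summing the coefficients of the diagrams
   (E, iota, [::]) with iota an isomorphism gives a linear functional that vanishes
   on every relation ((R2) preserves this class, the others never involve it) and
   takes the value 1 on the empty diagram. *)

From HB Require Import structures.
From mathcomp Require Import all_boot all_order all_algebra.
From mathcomp Require Import boolp zify.
Set Implicit Arguments. Unset Strict Implicit. Unset Printing Implicit Defensive.
Import Order.TTheory GRing.Theory.
Open Scope order_scope.

Section Rank.
Context {d : Order.disp_t} (T : finTBLatticeType d).
Implicit Types (x y z : T) (s : seq T).

Lemma maxchainP y k :
  maxchain y k <-> exists2 s, size s = k & path (@covers _ T) \bot s /\ last \bot s = y.
Proof.
split=> [/existsP[t /andP[hp /eqP hl]]|[s hs [hp hl]]].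
  by exists (val t); rewrite ?size_tuple.
have hs' : size s == k by rewrite hs.
by apply/existsP; exists (Tuple hs'); rewrite /= hp hl eqxx.
Qed.

Lemma covers_lt x y : covers x y -> x < y.
Proof. by case/andP. Qed.

Lemma maxchain_ltn_card y k : maxchain y k -> (k < #|T|)%N.
Proof.
case/maxchainP=> s <- [hp _].
have hs : sorted <%O (\bot :: s) by apply: sub_path hp => a b /covers_lt.
have := max_card (mem (\bot :: s)).
by rewrite (card_uniqP (sorted_uniq (@lt_trans _ T) (@ltxx _ T) hs)).
Qed.

(* A maximal element of [x, y) is covered by y; maximality is measured by the
   size of the down-set. *)
Lemma ex_cover x y : x < y -> exists2 z, x <= z & covers z y.
Proof.
move=> hxy; have xS : (x <= x) && (x < y) by rewrite lexx hxy.
case: (@arg_maxnP _ x (fun z => (x <= z) && (z < y)) (fun z => #|[set u | u <= z]|) xS).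
move=> z /andP[hxz hzy] zmax.
exists z => //; rewrite /covers hzy; apply/forallP => w; apply/negP => /andP[hzw hwy].
have /zmax : (x <= w) && (w < y) by rewrite hwy (le_trans hxz (ltW hzw)).
rewrite /= leqNgt => /negP; apply; apply: proper_card; apply/properP; split.
- by apply/subsetP => u; rewrite !inE => /le_trans; apply; exact: ltW.
- by exists w; rewrite !inE // lt_geF.
Qed.

Lemma ex_covers_path x y : x <= y -> exists2 s, path (@covers _ T) x s & last x s = y.
Proof.
have [n] := ubnP #|[set z | (x <= z) && (z < y)]|.
elim: n y => // n IH y; rewrite ltnS => hn hxy.
have [<-|hne] := eqVneq x y; first by exists [::].
have [z hxz hzy] : exists2 z, x <= z & covers z y.
  by apply: ex_cover; rewrite lt_neqAle hne hxy.
have [|s hs hl] := IH z _ hxz.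
  apply: leq_trans hn; apply: proper_card; apply/properP; split.
  + apply/subsetP => u; rewrite !inE => /andP[-> /lt_trans]; apply.
    exact: covers_lt.
  + by exists z; rewrite !inE ?hxz ?(covers_lt hzy) ?ltxx ?andbF.
by exists (rcons s y); [rewrite rcons_path hs hl | rewrite last_rcons].
Qed.

Lemma ex_maxchain y : exists k, maxchain y k.
Proof.
have [s hp hl] := ex_covers_path (le0x y).
by exists (size s); apply/maxchainP; exists s.
Qed.

Hypothesis rT : ranked T.

Lemma rk_maxchain y k : maxchain y k -> rk y = k.
Proof.
move=> hk; apply/eqP; rewrite eqn_leq; apply/andP; split.
  by apply/bigmax_leqP => i _; case: ifP => // h; rewrite (rT h hk).
apply: leq_trans (leq_bigmax (Ordinal (maxchain_ltn_card hk))).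
by rewrite /= hk.
Qed.

Lemma maxchain_rk y : maxchain y (rk y).
Proof. by have [k hk] := ex_maxchain y; rewrite (rk_maxchain hk). Qed.

Lemma rk0 : rk (\bot : T) = 0%N.
Proof. by apply: rk_maxchain; apply/maxchainP; exists [::]. Qed.

Lemma rk_path x s : path (@covers _ T) x s -> rk (last x s) = (rk x + size s)%N.
Proof.
move=> hp; apply: rk_maxchain.
case/maxchainP: (maxchain_rk x) => s1 <- [hp1 hl1].
apply/maxchainP; exists (s1 ++ s); first by rewrite size_cat.
by rewrite cat_path last_cat hl1 hp1 hp.
Qed.

Lemma rk_covers x y : covers x y -> rk y = (rk x).+1.
Proof. by move=> hc; rewrite -[y]/(last x [:: y]) rk_path /= ?hc ?addn1. Qed.

Lemma rk_ltn x y : x < y -> (rk x < rk y)%N.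
Proof.
move=> hxy; have [[|z s] hp hl] := ex_covers_path (ltW hxy).
  by rewrite -hl ltxx in hxy.
by rewrite -hl rk_path // addnS ltnS leq_addr.
Qed.

Lemma rk_leq x y : x <= y -> (rk x <= rk y)%N.
Proof. by rewrite le_eqVlt => /orP[/eqP->//|/rk_ltn/ltnW]. Qed.

Lemma le_rk_eq x y : x <= y -> (rk y <= rk x)%N -> x = y.
Proof.
rewrite le_eqVlt => /orP[/eqP//|/rk_ltn hlt].
by rewrite leqNgt hlt.
Qed.

Lemma rk_eq0 x : rk x = 0%N -> x = \bot.
Proof. by move=> h; apply/esym/le_rk_eq; rewrite ?le0x ?h. Qed.

End Rank.

Lemma rk_leq_homo {d1 d2 : Order.disp_t} (T1 : finTBLatticeType d1)
    (T2 : finTBLatticeType d2) (f : T1 -> T2) :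
  ranked T1 -> ranked T2 -> {homo f : x y / x < y} -> forall x, (rk x <= rk (f x))%N.
Proof.
move=> r1 r2 hf x; have [n] := ubnP (rk x); elim: n x => // n IH x.
rewrite ltnS => hn; have [->|hx] := eqVneq x \bot; first by rewrite rk0.
have [w _ hw] : exists2 w, \bot <= w & covers w x by apply: ex_cover; rewrite lt0x.
rewrite (rk_covers r1 hw) in hn *.
exact: leq_ltn_trans (IH w hn) (rk_ltn r2 (hf _ _ (covers_lt hw))).
Qed.

Lemma atomicP {d : Order.disp_t} (T : finTBLatticeType d) :
  atomic T <-> forall x y : T, (forall a, atom a -> a <= x -> a <= y) -> x <= y.
Proof.
split=> [hA x y h|h F].
  have [A [hat hx]] := hA x; rewrite [X in X <= _]hx; apply/joinsP => a ha.
  by apply: h; [exact: hat | rewrite hx; exact: joins_sup].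
exists [set a | atom a && (a <= F)]; split.
  by move=> a; rewrite inE => /andP[].
apply/le_anti/andP; split; last by apply/joinsP => a; rewrite inE => /andP[].
by apply: h => a ha haF; apply: joins_sup; rewrite inE ha haF.
Qed.

Lemma nontrivialP {d : Order.disp_t} (T : finTBLatticeType d) :
  nontrivial T <-> (\top : T) != \bot.
Proof.
split=> [/card_gt1P[x [y [_ _]]]|h]; last by apply/card_gt1P; exists \top, \bot.
apply: contraNneq => e.
have bot_only (z : T) : z = \bot by apply/eqP; rewrite -lex0 -e lex1.
by rewrite (bot_only x) (bot_only y).
Qed.

Lemma embedding_le {d1 d2 : Order.disp_t} (T1 : finTBLatticeType d1)
    (T2 : finTBLatticeType d2) (f : T1 -> T2) :
  embedding f -> forall x y, (f x <= f y) = (x <= y).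
Proof.
case=> hinj hmon _ hj _ x y; apply/idP/idP; last exact: hmon.
by rewrite !leEjoin -hj => /eqP/hinj ->.
Qed.

Lemma embedding_lt {d1 d2 : Order.disp_t} (T1 : finTBLatticeType d1)
    (T2 : finTBLatticeType d2) (f : T1 -> T2) :
  embedding f -> forall x y, (f x < f y) = (x < y).
Proof.
move=> hf x y; rewrite !lt_neqAle (embedding_le hf).
by case: hf => hinj _ _ _ _; rewrite (inj_eq hinj).
Qed.

(* A join-preserving map that preserves ranks is injective: f x = f y forces
   x and y to have the same rank as x `|` y. *)
Lemma rk_join_embedding {d1 d2 : Order.disp_t} (T1 : finTBLatticeType d1)
    (T2 : finTBLatticeType d2) (f : T1 -> T2) :
  ranked T1 -> ranked T2 -> {morph f : x y / x `|` y} ->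
  (forall x, rk (f x) = rk x) -> embedding f.
Proof.
move=> r1 r2 hj hrk; have hmon x y : x <= y -> f x <= f y.
  by rewrite !leEjoin -hj => /eqP->.
split=> //.
- move=> x y hxy.
  have fU : f (x `|` y) = f x by rewrite hj hxy joinxx.
  have join_eq z : f z = f x -> z <= x `|` y -> z = x `|` y.
    move=> hz hle; apply: (le_rk_eq r1 hle).
    by rewrite -(hrk z) -(hrk (x `|` y)) hz fU.
  by rewrite [LHS](join_eq x) ?leUl // [RHS](join_eq y (esym hxy)) ?leUr.
- by apply: (rk_eq0 r2); rewrite hrk rk0.
- by move=> a; rewrite /atom hrk.
Qed.

Lemma embedding_top {d1 d2 : Order.disp_t} (T1 : finTBLatticeType d1)
    (T2 : finTBLatticeType d2) (f : T1 -> T2) :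
  ranked T1 -> ranked T2 -> embedding f ->
  rk (\top : T1) = rk (\top : T2) -> f \top = \top.
Proof.
move=> r1 r2 hf hrk; apply: (le_rk_eq r2 (lex1 _)); rewrite -hrk.
by apply: rk_leq_homo => // x y; rewrite (embedding_lt hf).
Qed.

Lemma surjective_embedding_rk {d1 d2 : Order.disp_t} (T1 : finTBLatticeType d1)
    (T2 : finTBLatticeType d2) (f : T1 -> T2) :
  ranked T1 -> ranked T2 -> embedding f -> (forall y, exists x, f x = y) ->
  rk (\top : T1) = rk (\top : T2).
Proof.
move=> r1 r2 hf hsurj; pose g y := odflt \bot [pick x | f x == y].
have fgK y : f (g y) = y.
  have [x hx] := hsurj y; rewrite /g; case: pickP => [x' /eqP //|/(_ x)].
  by rewrite hx eqxx.
apply/eqP; rewrite eqn_leq; apply/andP; split.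
  apply: leq_trans (rk_leq_homo r1 r2 (f := f) _ \top) (rk_leq r2 (lex1 _)).
  by move=> x y; rewrite (embedding_lt hf).
apply: leq_trans (rk_leq_homo r2 r1 (f := g) _ \top) (rk_leq r1 (lex1 _)).
by move=> x y hxy; rewrite -(embedding_lt hf) !fgK.
Qed.

Definition ivl {d : Order.disp_t} (E : finTBLatticeType d) (X : E) : Type :=
  {y : E | y <= X}.

Section IntervalInstances.
Context {d : Order.disp_t} (E : finTBLatticeType d) (X : E).
HB.instance Definition _ := SubType.copy (ivl X) {y : E | y <= X}.
HB.instance Definition _ := Finite.copy (ivl X) {y : E | y <= X}.
Fact ivl_meet_closed : meet_closed (fun y : E => y <= X).
Proof. by move=> x y; rewrite !unfold_in /= => /(le_trans (leIl _ _)). Qed.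
Fact ivl_join_closed : join_closed (fun y : E => y <= X).
Proof. by move=> x y; rewrite !unfold_in /= => hx hy; rewrite leUx hx hy. Qed.
Fact ivl_bot_closed : (\bot : E) \in (fun y : E => y <= X).
Proof. by rewrite unfold_in /= le0x. Qed.
HB.instance Definition _ := Order.SubChoice_isBSubLattice.Build d E
  (fun y : E => y <= X) d (ivl X) ivl_meet_closed ivl_join_closed ivl_bot_closed.
Definition ivl_top : ivl X := @Sub _ _ (ivl X) X (lexx X).
Fact ivl_lex1 (x : ivl X) : x <= ivl_top.
Proof. by rewrite -Order.le_val; exact: (valP x). Qed.
HB.instance Definition _ := Order.hasTop.Build d (ivl X) ivl_lex1.
End IntervalInstances.

Section Interval.
Context {d : Order.disp_t} (E : finTBLatticeType d) (X : E).
Implicit Types x y : ivl X.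

Lemma ivl_le x y : (x <= y) = (val x <= val y).
Proof. by rewrite -Order.le_val. Qed.

Lemma ivl_lt x y : (x < y) = (val x < val y).
Proof. by rewrite !lt_neqAle ivl_le (inj_eq val_inj). Qed.

Lemma covers_val x y : covers x y -> covers (val x) (val y).
Proof.
case/andP; rewrite ivl_lt => hlt /forallP h; rewrite /covers hlt.
apply/forallP => z; apply/negP => /andP[h1 h2].
have hz : z <= X by exact: le_trans (ltW h2) (valP y).
by have := h (Sub z hz); rewrite !ivl_lt SubK h1 h2.
Qed.

Lemma maxchain_val y k : maxchain y k -> maxchain (val y) k.
Proof.
case/maxchainP=> s <- [hp hl]; apply/maxchainP; exists (map val s).
  by rewrite size_map.
rewrite -[\bot]/(val (\bot : ivl X)) last_map hl path_map; split=> //.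
by apply: sub_path hp => a b /covers_val.
Qed.

Lemma ivl_nontrivial : X != \bot -> nontrivial (ivl X).
Proof. by move=> hX; apply/nontrivialP; rewrite -(inj_eq val_inj). Qed.

Hypothesis rE : ranked E.

Lemma ivl_ranked : ranked (ivl X).
Proof. by move=> F k1 k2 /maxchain_val h1 /maxchain_val /(rE h1). Qed.

Lemma rk_val y : rk (val y) = rk y.
Proof.
have [k hk] := ex_maxchain y.
by rewrite (rk_maxchain ivl_ranked hk) (rk_maxchain rE (maxchain_val hk)).
Qed.

End Interval.

Lemma ivl_geometric {d : Order.disp_t} (E : finTBLatticeType d) (X : E) :
  geometric E -> geometric (ivl X).
Proof.
case=> rE /atomicP hA hs; split; first exact: ivl_ranked.
- apply/atomicP => x y h; rewrite ivl_le; apply: hA => a ha hax.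
  have haX : a <= X by exact: le_trans hax (valP x).
  by have := h (Sub a haX); rewrite /atom -(rk_val rE) !ivl_le SubK; apply.
- by move=> F1 F2; rewrite -!(rk_val rE); exact: hs.
Qed.

Section Product.
Context {d1 d2 : Order.disp_t} (T1 : finTBLatticeType d1) (T2 : finTBLatticeType d2).
Local Notation P := (T1 *p T2)%type.
Implicit Types u v : P.

Lemma prod_le u v : (u <= v) = (u.1 <= v.1) && (u.2 <= v.2).
Proof. by []. Qed.

Lemma covers_prod u v : covers u v ->
  (covers u.1 v.1 /\ u.2 = v.2) \/ (u.1 = v.1 /\ covers u.2 v.2).
Proof.
case/andP; rewrite lt_neqAle prod_le => /andP[hne /andP[h1 h2]] /forallP hb.
have between w : u <= w -> w <= v -> w != u -> w != v -> False.
  by move=> l1 l2 n1 n2; have := hb w; rewrite !lt_neqAle l1 l2 eq_sym n1 n2.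
have [e1|n1] := eqVneq u.1 v.1.
  right; split=> //; rewrite /covers lt_neqAle h2 andbT; apply/andP; split.
    apply: contraNneq hne => e2.
    by rewrite [u]surjective_pairing [v]surjective_pairing e1 e2.
  apply/forallP => w; apply/negP => /andP[hw1 hw2]; apply: (between (u.1, w)).
  1,2: by rewrite prod_le /= ?lexx ?h1 ?(ltW hw1) ?(ltW hw2).
  + by apply/eqP => /(congr1 snd) /= ew; rewrite ew ltxx in hw1.
  + by apply/eqP => /(congr1 snd) /= ew; rewrite ew ltxx in hw2.
have [e2|n2] := eqVneq u.2 v.2.
  left; split=> //; rewrite /covers lt_neqAle n1 h1; apply/forallP => w.
  apply/negP => /andP[hw1 hw2]; apply: (between (w, u.2)).
  1,2: by rewrite prod_le /= ?lexx ?h2 ?(ltW hw1) ?(ltW hw2).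
  + by apply/eqP => /(congr1 fst) /= ew; rewrite ew ltxx in hw1.
  + by apply/eqP => /(congr1 fst) /= ew; rewrite ew ltxx in hw2.
exfalso; apply: (between (v.1, u.2)).
1,2: by rewrite prod_le /= lexx ?h1 ?h2.
+ by apply/eqP => /(congr1 fst) /= ew; rewrite ew eqxx in n1.
+ by apply/eqP => /(congr1 snd) /= ew; rewrite ew eqxx in n2.
Qed.

Hypotheses (r1 : ranked T1) (r2 : ranked T2).

Lemma rk_prod_path u s : path (@covers _ P) u s ->
  (rk (last u s).1 + rk (last u s).2 = rk u.1 + rk u.2 + size s)%N.
Proof.
elim: s u => [|v s IH] u /=; first by rewrite addn0.
case/andP=> hc /IH ->.
by case: (covers_prod hc) => [[/(rk_covers r1) -> ->]|[-> /(rk_covers r2) ->]];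
  rewrite ?addSn ?addnS.
Qed.

Lemma maxchain_prod (F : P) k : maxchain F k -> k = (rk F.1 + rk F.2)%N.
Proof. by case/maxchainP=> s <- [/rk_prod_path hs <-]; rewrite hs /= (rk0 r1) (rk0 r2). Qed.

Lemma prod_ranked : ranked P.
Proof. by move=> F k1 k2 /maxchain_prod -> /maxchain_prod ->. Qed.

Lemma rk_prod (F : P) : rk F = (rk F.1 + rk F.2)%N.
Proof. exact/maxchain_prod/maxchain_rk/prod_ranked. Qed.

Lemma modular_flat_top_bot : modular_flat ((\top, \bot) : P).
Proof.
move=> q; rewrite !rk_prod /= meet1x meet0x join1x join0x (rk0 r2).
by rewrite !addn0 addnCA.
Qed.

End Product.

Lemma prod_geometric {d1 d2 : Order.disp_t} (T1 : finTBLatticeType d1)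
    (T2 : finTBLatticeType d2) :
  geometric T1 -> geometric T2 -> geometric (T1 *p T2)%type.
Proof.
case=> r1 /atomicP a1 s1 [r2 /atomicP a2 s2]; split; first exact: prod_ranked.
- apply/atomicP => x y h; rewrite prod_le; apply/andP; split.
  + apply: a1 => a ha hax; have := h ((a, \bot) : (T1 *p T2)%type).
    rewrite /atom rk_prod //= rk0 // addn0 prod_le /= le0x !andbT.
    by move/(_ ha hax); rewrite prod_le => /andP[].
  + apply: a2 => a ha hax; have := h ((\bot, a) : (T1 *p T2)%type).
    rewrite /atom rk_prod //= rk0 // add0n prod_le /= le0x /=.
    by move/(_ ha hax); rewrite prod_le => /andP[].
- move=> F1 F2; rewrite !rk_prod //=.
  by have := s1 F1.1 F2.1; have := s2 F1.2 F2.2; lia.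
Qed.

Lemma prod_splits_off {d1 d2 : Order.disp_t} (T1 : finTBLatticeType d1)
    (T2 : finTBLatticeType d2) (x : T1) :
  geometric T1 -> geometric T2 -> nontrivial T1 -> nontrivial T2 ->
  splits_off ((x, \bot) : (T1 *p T2)%type).
Proof. by move=> g1 g2 n1 n2; exists d1, d2, T1, T2, id; split=> //; exists id. Qed.

Lemma top_not_split {d : Order.disp_t} (E : finTBLatticeType d) : ~ splits_off (\top : E).
Proof.
case=> d1 [d2 [E1 [E2 [psi [_ [_ /nontrivialP hn2] [g psiK gK] hle h2]]]]].
suff bot_only (y : E2) : y = \bot by rewrite (bot_only \top) eqxx in hn2.
have := lex1 (g (\bot, y)); rewrite hle gK h2 /= => /andP[_].
by rewrite lex0 => /eqP.
Qed.

Lemma joinJ_neq0 {d : Order.disp_t} (E : finTBLatticeType d) (J : seq E) :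
  ranked E -> all (@atom _ E) J -> J != [::] -> joinJ J != \bot.
Proof.
case: J => // H J rE /andP[hH _] _; apply: contraTneq hH => hX.
have : H <= \bot by rewrite -hX; exact: (joins_sup_seq _ (mem_head H J)).
by rewrite lex0 => /eqP ->; rewrite /atom (rk0 rE).
Qed.

Section ModularComplement.
Context {d : Order.disp_t} (E : finTBLatticeType d).
Hypotheses (rE : ranked E) (sE : semimodular E).
Variables (F X : E).
Hypotheses (modF : modular_flat F) (XF0 : X `&` F = \bot).

Lemma rk_join_complement a b : a <= F -> b <= X -> rk (a `|` b) = (rk a + rk b)%N.
Proof.
move=> ha hb.
have bF0 : b `&` F = \bot by apply/eqP; rewrite -lex0 -XF0 leI2.
have ab0 : a `&` b = \bot by apply/eqP; rewrite -lex0 -bF0 meetC leI2.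
have := sE a b; rewrite ab0 (rk0 rE) add0n.
have := modF (a `|` b); rewrite joinA (join_l ha).
have := modF b; rewrite meetC bF0 (rk0 rE) add0n => ->.
have : (rk a <= rk (F `&` (a `|` b)))%N by apply: (rk_leq rE); rewrite lexI ha leUl.
lia.
Qed.

Local Notation P := (ivl F *p ivl X)%type.

Definition join_pair (p : P) : E := val p.1 `|` val p.2.

Lemma rk_join_pair p : rk (join_pair p) = rk p.
Proof.
rewrite rk_join_complement ?(valP p.1) ?(valP p.2) // rk_prod ?(rk_val rE) //.
all: exact: ivl_ranked.
Qed.

Lemma join_pair_embedding : embedding join_pair.
Proof.
apply: rk_join_embedding rk_join_pair; last by move=> p q; rewrite /join_pair joinACA.
  by apply: prod_ranked; exact: ivl_ranked.
exact: rE.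
Qed.

End ModularComplement.

Lemma inspan_relvec {dL : Order.disp_t} (L : finTBLatticeType dL) (r : diagram L -> rat) :
  relvec r -> inspan r.
Proof.
by move=> hr; apply: span_ext (spanS 1%R hr (span0 L)) _ => D; rewrite mul1r addr0.
Qed.

Section DiagramSplitting.
Context {dL : Order.disp_t} (L : finTBLatticeType dL) (hnt : nontrivial L).
Context {dE : Order.disp_t} (E : finTBLatticeType dE) (hE : geometric E).
Variables (iota : L -> E) (J : seq E).
Hypotheses (hi : modext iota) (hJ : all (@atom _ E) J) (hJne : J != [::]).
Hypotheses (hmeet : joinJ J `&` iota \top = \bot) (htop : iota \top `|` joinJ J = \top).

Local Notation F := (iota \top).
Local Notation X := (joinJ J).
Local Notation P := (ivl F *p ivl X)%type.

Let rE : ranked E. Proof. by case: hE. Qed.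
Let hemb : embedding iota. Proof. by case: hi. Qed.

Lemma iota_le_top x : iota x <= F.
Proof. by rewrite (embedding_le hemb) lex1. Qed.

Lemma letter_le_join H : H \in J -> H <= X.
Proof. by move=> hH; exact: (joins_sup_seq _ hH). Qed.

Definition split_iota (x : L) : P := (@Sub _ _ (ivl F) (iota x) (iota_le_top x), \bot).

Definition split_word : seq P := [seq (\bot, insubd \bot H) | H <- J].

Lemma rk_split (p : P) : rk p = (rk (val p.1) + rk (val p.2))%N.
Proof. by rewrite rk_prod ?(rk_val rE) //; exact: ivl_ranked. Qed.

Lemma split_iota_embedding : embedding split_iota.
Proof.
case: hemb => hinj hmon h0 hj hat; split.
- by move=> x y [/hinj].
- by move=> x y hxy; rewrite prod_le /= lexx andbT ivl_le /= hmon.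
- by congr (_, _); apply: val_inj; rewrite /= h0.
- by move=> x y; congr (_, _); [apply: val_inj; rewrite /= hj | rewrite joinxx].
- by move=> a ha; rewrite /atom rk_split /= (rk0 rE) addn0; exact: hat.
Qed.

Lemma split_iota_top : split_iota \top = (\top, \bot).
Proof. by congr (_, _); apply: val_inj. Qed.

Lemma split_iota_modext : modext split_iota.
Proof.
split; first exact: split_iota_embedding.
  by rewrite split_iota_top; apply: modular_flat_top_bot; exact: ivl_ranked.
move=> y; rewrite split_iota_top; split=> [|[x <-]]; last first.
  by rewrite -split_iota_top (embedding_le split_iota_embedding) lex1.
rewrite prod_le lex0 andbC => /andP[/eqP y2 _]; case: hi => _ _ himg.
have [x hx] := (himg (val y.1)).1 (valP y.1).
by exists x; rewrite [RHS]surjective_pairing y2; congr (_, _); apply: val_inj.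
Qed.

Lemma val_split_letter H : H \in J -> val (insubd (\bot : ivl X) H) = H.
Proof. by move=> hH; rewrite insubdK // unfold_in /= letter_le_join. Qed.

Lemma split_word_atoms : all (@atom _ P) split_word.
Proof.
apply/allP => _ /mapP[H hH ->]; rewrite /atom rk_split /= val_split_letter //.
by rewrite (rk0 rE) add0n; exact: (allP hJ).
Qed.

Definition split_diagram : diagram L :=
  Diagram (prod_geometric (ivl_geometric F hE) (ivl_geometric X hE))
    split_iota_modext split_word_atoms.

Lemma split_diagram_splits_off : splits_off (Fiota split_diagram).
Proof.
rewrite /Fiota /= split_iota_top; apply: prod_splits_off; try exact: ivl_geometric.
  apply: ivl_nontrivial; case: hemb => hinj _ <- _ _.
  by rewrite (inj_eq hinj); apply/nontrivialP.
exact/ivl_nontrivial/joinJ_neq0.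
Qed.

Lemma split_diagram_rel2 :
  relvec (fun D => (delta split_diagram D - delta (Diagram hE hi hJ) D)%R).
Proof.
have sE : semimodular E by case: hE.
have modF : modular_flat F by case: hi.
apply: (@rel2 _ L split_diagram (Diagram hE hi hJ) (@join_pair _ E F X)) => /=.
- exact: join_pair_embedding.
- by rewrite -(rk_join_pair rE sE modF hmeet) /join_pair /= htop.
- by move=> x; rewrite /join_pair /= joinx0.
- rewrite -map_comp -[LHS]map_id; apply/eq_in_map => H hH /=.
  by rewrite /join_pair /= join0x val_split_letter.
Qed.

Lemma split_span : inspan (delta (Diagram hE hi hJ)).
Proof.
have r4 := rel4 split_diagram_splits_off.
apply: span_ext (spanS (-1)%R split_diagram_rel2 (inspan_relvec r4)) _ => D.
by rewrite mulN1r opprB subrK.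
Qed.

End DiagramSplitting.

Lemma if_pselectT (P : Prop) (A : Type) (a b : A) : P -> (if pselect P then a else b) = a.
Proof. by case: pselect. Qed.

Lemma if_pselectF (P : Prop) (A : Type) (a b : A) : ~ P -> (if pselect P then a else b) = b.
Proof. by case: pselect. Qed.

Section FormalSums.
Variable T : Type.
Local Open Scope ring_scope.
Implicit Types (s : seq (rat * T)) (w : T -> rat).

Definition formal s (x : T) : rat :=
  \sum_(p <- s) (if pselect (x = p.2) then p.1 else 0).

Definition weight w s : rat := \sum_(p <- s) p.1 * w p.2.

Lemma formal_cons c y s x :
  formal ((c, y) :: s) x = (if pselect (x = y) then c else 0) + formal s x.
Proof. by rewrite /formal big_cons. Qed.

Lemma formal_cat s1 s2 x : formal (s1 ++ s2) x = formal s1 x + formal s2 x.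
Proof. by rewrite /formal big_cat. Qed.

Lemma weight_cat w s1 s2 : weight w (s1 ++ s2) = weight w s1 + weight w s2.
Proof. by rewrite /weight big_cat. Qed.

Definition scale_formal (c : rat) s := [seq (c * p.1, p.2) | p <- s].

Lemma formal_scale c s x : formal (scale_formal c s) x = c * formal s x.
Proof.
rewrite /formal big_map mulr_sumr; apply: eq_bigr => p _.
by case: (pselect (x = p.2)); rewrite /= ?mulr0.
Qed.

Lemma weight_scale w c s : weight w (scale_formal c s) = c * weight w s.
Proof. by rewrite /weight big_map mulr_sumr; apply: eq_bigr => p _; rewrite mulrA. Qed.

(* Induction on the length: the entries with the same support point as the
   head add up to zero and can all be removed at once. *)
Lemma weight_formal0 w s : (forall x, formal s x = 0) -> weight w s = 0.
Proof.
have [n] := ubnP (size s); elim: n s => // n IH [|[c y] s] /= hn hs.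
  by rewrite /weight big_nil.
pose at_y (p : rat * T) := `[< y = p.2 >].
have formal_at_y s' x : formal s' x = \sum_(p <- s' | `[< x = p.2 >]) p.1.
  rewrite /formal [RHS]big_mkcond; apply: eq_bigr => p _.
  by case: (pselect (x = p.2)) => h; [rewrite asboolT | rewrite asboolF].
have formal_off x : x <> y ->
    formal [seq p <- s | ~~ at_y p] x = formal ((c, y) :: s) x.
  move=> hxy; rewrite formal_cons if_pselectF // add0r.
  rewrite !formal_at_y big_filter_cond [RHS](bigID at_y) /= [X in X + _]big1 ?add0r.
    by apply: eq_bigl => p; rewrite andbC.
  by move=> p /andP[/asboolP hx /asboolP hy]; case: hxy; rewrite hx hy.
rewrite /weight big_cons (bigID at_y) /=.
have -> : \sum_(p <- s | ~~ at_y p) p.1 * w p.2 = 0.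
  rewrite -big_filter; apply: IH => [|x].
    by rewrite size_filter (leq_ltn_trans (count_size _ _)).
  have [->|hxy] := pselect (x = y); last by rewrite formal_off.
  by rewrite formal_at_y big_filter_cond big_pred0 // => p; rewrite andNb.
rewrite (eq_bigr (fun p => p.1 * w y)) => [|p /asboolP <- //].
rewrite -mulr_suml addr0 -mulrDl; have := hs y.
by rewrite formal_cons if_pselectT // formal_at_y => ->; rewrite mul0r.
Qed.
End FormalSums.

Lemma nonempty_grade0_zero {dL : Order.disp_t} (L : finTBLatticeType dL)
    (hnt : nontrivial L) (G : diagram L) :
  dg_J G <> [::] -> grade0 G -> inspan (delta G).
Proof.
case: G => dE E hE iota hi J hJ /= /eqP hJne hg.
have [htop|hlt] := eqVneq (iota \top `|` joinJ J) \top; last first.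
  by apply/inspan_relvec/rel3; rewrite /Fiota /= lt_neqAle hlt lex1.
apply: split_span => //; have [[_ _ h0 _ _] _ himg] := hi.
have [x hx] := (himg _).1 (leIr (iota \top) (joinJ J)).
by rewrite -hx (hg x hx) h0.
Qed.

Section Balanced.
Context {dL : Order.disp_t} (L : finTBLatticeType dL).
Local Open Scope ring_scope.
Implicit Types (G D : diagram L) (r v : diagram L -> rat).

Definition trivial_diagram (D : diagram L) : Prop := dg_J D = [::] /\ Fiota D = \top%O.

Definition trivial_weight (D : diagram L) : rat := if pselect (trivial_diagram D) then 1 else 0.

(* By weight_formal0, all representations [s] of a vector have the same weight. *)
Definition balanced (v : diagram L -> rat) : Prop :=
  exists s, (forall D, v D = formal s D) /\ weight trivial_weight s = 0.

Lemma formal_single c G D : formal [:: (c, G)] D = c * delta G D.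
Proof.
rewrite formal_cons /formal big_nil addr0 /delta.
by have [h|h] := pselect (D = G); [rewrite !if_pselectT ?mulr1 | rewrite !if_pselectF ?mulr0].
Qed.

Lemma weight_single c G : weight trivial_weight [:: (c, G)] = c * trivial_weight G.
Proof. by rewrite /weight big_seq1. Qed.

Lemma balanced_lin c r v : balanced r -> balanced v -> balanced (fun D => c * r D + v D).
Proof.
case=> s1 [hs1 hw1] [s2 [hs2 hw2]]; exists (scale_formal c s1 ++ s2); split.
  by move=> D; rewrite formal_cat formal_scale hs1 hs2.
by rewrite weight_cat weight_scale hw1 hw2 mulr0 addr0.
Qed.

Lemma balanced_ext v w : balanced v -> (forall D, v D = w D) -> balanced w.
Proof. by case=> s [hs hw] hvw; exists s; split=> // D; rewrite -hvw. Qed.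

Lemma delta_balanced G : ~ trivial_diagram G -> balanced (delta G).
Proof.
move=> hG; exists [:: (1, G)]; split; first by move=> D; rewrite formal_single mul1r.
by rewrite weight_single /trivial_weight if_pselectF ?mulr0.
Qed.

Lemma rel2_trivial (G G' : diagram L) (phi : dg_E G -> dg_E G') :
  embedding phi -> rk (\top%O : dg_E G) = rk (\top%O : dg_E G') ->
  (forall x : L, dg_iota G' x = phi (dg_iota G x)) ->
  dg_J G' = map phi (dg_J G) -> trivial_diagram G <-> trivial_diagram G'.
Proof.
move=> hphi hrk hio hJ; have [[r1 _ _] [r2 _ _]] := (dg_geom G, dg_geom G').
have phi_top := embedding_top r1 r2 hphi hrk.
rewrite /trivial_diagram /Fiota hio hJ; split=> [[-> ->] //|[]].
case: (dg_J G) => // _ h; split=> //.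
by case: hphi => hinj _ _ _ _; apply: hinj; rewrite h phi_top.
Qed.

Lemma relvec_balanced r : relvec r -> balanced r.
Proof.
case=> [dE E hE i hi J hJ p q hJ' hpq | G G' phi hphi hrk hio hJ | G hlt | G hsplit
        | G F _ _ hcount].
- have nontrivial_word K (hK : all (@atom _ E) K) :
      K <> [::] -> ~ trivial_diagram (Diagram hE hi hK) by move=> hK0 [].
  have hJne : J <> [::] by move=> J0; move: hpq; rewrite J0 /=; lia.
  have hJ'ne : tswap J p q <> [::].
    by move=> /(congr1 size); rewrite !size_set_nth /=; lia.
  apply: (balanced_ext (balanced_lin 1 (delta_balanced (nontrivial_word _ hJ hJne))
    (delta_balanced (nontrivial_word _ hJ' hJ'ne)))) => D.
  by rewrite mul1r.
- exists [:: (1, G); (-1, G')]; split.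
    by move=> D; rewrite (formal_cat [:: _] [:: _]) !formal_single mul1r mulN1r.
  rewrite (weight_cat _ [:: _] [:: _]) !weight_single mul1r mulN1r.
  suff -> : trivial_weight G = trivial_weight G' by rewrite subrr.
  have hGG' := rel2_trivial hphi hrk hio hJ; rewrite /trivial_weight.
  have [hG|hG] := pselect (trivial_diagram G).
    by rewrite !if_pselectT //; apply/hGG'.
  by rewrite !if_pselectF // => /hGG'.
- by apply: delta_balanced => -[_ hF]; rewrite hF join1x ltxx in hlt.
- by apply: delta_balanced => -[_ hF]; move: hsplit; rewrite hF => /top_not_split.
- by apply: delta_balanced => -[hJ _]; rewrite hJ in hcount.
Qed.

Lemma inspan_balanced v : inspan v -> balanced v.
Proof.
elim=> [|c r v' hr _ hv'|v' w _ hv' hvw].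
- by exists [::]; split=> [D|]; rewrite /formal /weight big_nil.
- exact: balanced_lin (relvec_balanced hr) hv'.
- exact: balanced_ext hv' hvw.
Qed.

Lemma emptyDiagram_nonzero (hL : geometric L) : ~ inspan (delta (emptyDiagram hL)).
Proof.
case/inspan_balanced => s [hs hw].
have : weight trivial_weight (s ++ [:: (-1, emptyDiagram hL)]) = 0.
  by apply: weight_formal0 => D; rewrite formal_cat formal_single -hs mulN1r subrr.
by rewrite weight_cat hw weight_single add0r mulN1r /trivial_weight if_pselectT.
Qed.

End Balanced.

Section Grade0.
Context {dL : Order.disp_t} (L : finTBLatticeType dL) (hL : geometric L).
Local Open Scope ring_scope.

Lemma empty_word_span (G : diagram L) : dg_J G = [::] ->
  exists c : rat, inspan (fun D => delta G D - c * delta (emptyDiagram hL) D).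
Proof.
case: G => dE E hE iota hi J hJ /= J0; subst J.
have [htop|hlt] := eqVneq (iota \top) \top%O; last first.
  exists 0; apply: span_ext (inspan_relvec (rel3 _)) _ => [|D]; last first.
    by rewrite mul0r subr0.
  by rewrite /Fiota /joinJ /= big_nil joinx0 lt_neqAle hlt lex1.
exists 1; have [he _ himg] := hi.
have hrk : rk (\top%O : L) = rk (\top%O : E).
  apply: surjective_embedding_rk he _ => [||y]; [by case: hL | by case: hE |].
  by apply: (himg y).1; rewrite htop lex1.
have hr := @rel2 _ L (emptyDiagram hL) (Diagram hE hi hJ) iota he hrk (fun x => erefl) erefl.
apply: span_ext (spanS (-1) hr (span0 L)) _ => D.
by rewrite mulN1r opprB addr0 mul1r.
Qed.

Lemma deg_empty_word (G : diagram L) : dg_J G = [::] -> deg G = 0.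
Proof. by move=> hJ; rewrite /deg hJ /joinJ big_nil meet0x subrr mulr0 subrr. Qed.

End Grade0.

Close Scope order_scope.
Local Open Scope ring_scope.

Theorem mainTheorem11 (dL : Order.disp_t) (L : finTBLatticeType dL)
    (hL : geometric L) (hnt : nontrivial L) :
  (* every modular diagram with J non-empty in grading \hat0 is zero *)
  (forall G : diagram L, dg_J G <> [::] -> grade0 G -> inspan (delta G))
  (* the class of the empty diagram (L, id, [::]) is non-zero ... *)
  /\ ~ inspan (delta (emptyDiagram hL))
  (* ... and spans MD(L, \hat0) *)
  /\ (forall G : diagram L, grade0 G ->
        exists c : rat, inspan (fun D => delta G D - c * delta (emptyDiagram hL) D))
  (* MD(L, \hat0) is concentrated in degree 0 *)
  /\ (forall G : diagram L, grade0 G -> ~ inspan (delta G) -> deg G = 0).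
Proof.
have vanish (G : diagram L) : dg_J G <> [::] -> grade0 G -> inspan (delta G).
  exact: (nonempty_grade0_zero hnt).
split=> //; split; first exact: emptyDiagram_nonzero.
split=> G hg.
  have [hJ|hJ] := pselect (dg_J G = [::]); first exact: empty_word_span.
  by exists 0; apply: span_ext (vanish G hJ hg) _ => D; rewrite mul0r subr0.
move=> hG; apply: deg_empty_word; apply: contrapT => hJ.
exact/hG/vanish.
Qed.
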